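(* Let $R$ be a commutative ring with identity and $n\ge2$. The map $$\tau^{(n)}:(H^{(n-1)}_R,+)\to(U^{(n)}_R,\star),\qquad (x_0,\dots,x_{n-2})\mapsto\big(\boldsymbol{b}^{(1,n)}\big)^{x_0}\star\big(\boldsymbol{b}^{(2,n)}\big)^{x_1}\star\cdots\star\big(\boldsymbol{b}^{(n-1,n)}\big)^{x_{n-2}}$$ is a group isomorphism. Consequently, the map $\tau:(H_R,+)\to(U_R,\star)$ defined by letting the first $n$ terms of $\tau(\boldsymbol{x})$ be $\tau^{(n)}(x_0,\dots,x_{n-2})$ for every $n\ge2$ (and $\tau(\boldsymbol x)[0]=1$) is a well-defined group isomorphism; in particular $(U_{\mathbb{Z}},\star)\cong(H_{\mathbb{Z}},+)$.
   Context: $H_R$: sequences in $R$; $H_R^{(m)}$: length-$m$ sequences, with componentwise addition; $U_R=\{\boldsymbol a\in H_R:a_0=1\}$, $U^{(n)}_R$ its length-$n$ truncations, a group under the Hurwitz product $(\boldsymbol{a}\star\boldsymbol{b})_k=\sum_{h=0}^k\binom{k}{h}a_hb_{k-h}$ (for length-$n$ sequences computed for $k\le n-1$). $\boldsymbol{b}^{(1)}=(1,1,1,\dots)$; for $i\ge2$, $\boldsymbol{b}^{(i)}$ has entries $1$ at positions $0$ and $i$ and $0$ elsewhere; $\boldsymbol{b}^{(k,n)}$ is the truncation of $\boldsymbol{b}^{(k)}$ to length $n$. Powers: for $\boldsymbol{a}=(1,a_1,\dots)$ and $x\in R$, $\boldsymbol{a}^x[m]=\sum_{k=0}^mY_{m,k}(a_1,\dots,a_{m-k+1})\,x(x-1)\cdots(x-k+1)$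 with $Y_{m,k}(y_1,y_2,\dots)=\sum\frac{m!}{\prod_l j_l!(l!)^{j_l}}\prod_ly_l^{j_l}$ over nonnegative $(j_l)$, $\sum j_l=k$, $\sum lj_l=m$ ($Y_{0,0}=1$, $Y_{m,0}=0$ for $m\ge1$); over $\mathbb{Q}$-algebras this is the sequence with e.g.f. $A(t)^x$, and for positive integers $x$ it is the $x$-fold $\star$-power. *)

From HB Require Import structures.
From mathcomp Require Import all_boot all_order all_algebra.
Set Implicit Arguments. Unset Strict Implicit. Unset Printing Implicit Defensive.
Import Order.TTheory GRing.Theory Num.Theory.
Local Open Scope ring_scope.

Section Hurwitz.
Variable R : comPzRingType.

(* Infinite sequences H_R are functions nat -> R; length-n sequences
   H_R^(n) are finite functions {ffun 'I_n -> R} (with pointwise +). *)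

(* read the i-th entry of a length-n sequence (0 outside range, never used) *)
Definition at_ (n : nat) (a : {ffun 'I_n -> R}) (i : nat) : R :=
  match insub i with Some j => a j | None => 0 end.

Definition trunc (x : nat -> R) (n : nat) : {ffun 'I_n -> R} :=
  [ffun i : 'I_n => x (nat_of_ord i)].

Definition hprod (a b : nat -> R) : nat -> R :=
  fun k => \sum_(h < k.+1) 'C(k, h)%:R * a h * b (k - h)%N.

Definition hprodn (n : nat) (a b : {ffun 'I_n -> R}) : {ffun 'I_n -> R} :=
  [ffun k : 'I_n => hprod (at_ a) (at_ b) k].

Definition hunitn (n : nat) : {ffun 'I_n -> R} :=
  [ffun k : 'I_n => if nat_of_ord k == 0%N then 1 else 0].

(* partial Bell polynomial Y_{m,k}(y_1, y_2, ...); y is given as a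
   function nat -> R and only y 1, y 2, ... are used. j l encodes j_{l+1}. *)
Definition bellY (m k : nat) (y : nat -> R) : R :=
  \sum_(j : {ffun 'I_m -> 'I_m.+1} |
          ((\sum_(l < m) (j l : nat))%N == k) &&
          ((\sum_(l < m) (l.+1 * j l))%N == m))
    ((m`! %/ \prod_(l < m) ((j l)`! * (l.+1)`! ^ (j l)))%N%:R
       * \prod_(l < m) y l.+1 ^+ (j l)).

Definition ffact (x : R) (k : nat) : R := \prod_(i < k) (x - i%:R).

(* a^x [m] for a = (1, a_1, a_2, ...) *)
Definition hpow (a : nat -> R) (x : R) : nat -> R :=
  fun m => \sum_(k < m.+1) bellY m k a * ffact x k.

Definition hpown (n : nat) (a : {ffun 'I_n -> R}) (x : R) : {ffun 'I_n -> R} :=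
  [ffun m : 'I_n => hpow (at_ a) x m].

Definition bseq (i : nat) : nat -> R :=
  fun m => if i == 1%N then 1 else if (m == 0%N) || (m == i) then 1 else 0.

Definition bseqn (k n : nat) : {ffun 'I_n -> R} := trunc (bseq k) n.

Definition taun (n : nat) (x : {ffun 'I_n.-1 -> R}) : {ffun 'I_n -> R} :=
  \big[@hprodn n / hunitn n]_(i < n.-1) hpown (bseqn i.+1 n) (x i).

End Hurwitz.

From Pilot Require Import Defs.
From HB Require Import structures.
From mathcomp Require Import all_boot all_order all_algebra.
From mathcomp Require Import zify ring.
From Stdlib Require Import FunctionalExtensionality.
Set Implicit Arguments. Unset Strict Implicit. Unset Printing Implicit Defensive.
Import GRing.Theory.

(* The factor [b^(i)^x] of [tau^(n)] agrees with the unit below position [i]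
   and equals [x] at position [i]. Hence the [m]-th term of [tau x] is
   [x (m-1)] plus a quantity depending only on [x 0, ..., x (m-2)], and [tau]
   is bijective by forward substitution. The homomorphism property reduces to
   [a^(x+z) = a^x * a^z]. The shift of sequences is a derivation of the Hurwitz
   product, and Bell's recurrence for the partial Bell polynomials (proved on
   multiplicity vectors of partitions) says [(a^x)' = x a' * a^(x-1)]; so both
   sides of [a^(x+z) = a^x * a^z], like both sides of the associativity law,
   obey the same recursion in the index. *)

Section HurwitzProduct.
Variable R : comPzRingType.
Local Open Scope ring_scope.
Implicit Types (a b c : nat -> R) (r : R).

Definition hunit : nat -> R := fun k => if k == 0%N then 1 else 0.

Definition hderiv a : nat -> R := fun k => a k.+1.

Lemma hprod0 a b : hprod a b 0 = a 0 * b 0.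
Proof. by rewrite /hprod big_ord1 mul1r. Qed.

Lemma eq_hprod k a a' b b' :
  (forall i, (i <= k)%N -> a i = a' i) -> (forall i, (i <= k)%N -> b i = b' i) ->
  hprod a b k = hprod a' b' k.
Proof.
move=> ea eb; apply: eq_bigr => h _.
have hk : (h <= k)%N by rewrite -ltnS.
by rewrite ea // eb // leq_subr.
Qed.

Lemma hprodC a b : hprod a b = hprod b a.
Proof.
apply: functional_extensionality => k; rewrite /hprod (reindex_inj rev_ord_inj).
apply: eq_bigr => h _; have hk : (h <= k)%N by rewrite -ltnS.
by rewrite /= subSS bin_sub // subKn // mulrAC.
Qed.

Lemma hprod1 a : hprod a hunit = a.
Proof.
apply: functional_extensionality => k; rewrite /hprod big_ord_recr /= subnn binn.
rewrite big1 ?add0r ?mul1r ?mulr1 // => h _.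
by rewrite /hunit subn_eq0 leqNgt ltn_ord mulr0.
Qed.

Lemma hprodDl a b c k :
  hprod (fun i => a i + b i) c k = hprod a c k + hprod b c k.
Proof. by rewrite /hprod -big_split; apply: eq_bigr => h _; rewrite mulrDr mulrDl. Qed.

Lemma hprodDr a b c k :
  hprod a (fun i => b i + c i) k = hprod a b k + hprod a c k.
Proof. by rewrite /hprod -big_split; apply: eq_bigr => h _; rewrite mulrDr. Qed.

Lemma hprodZl r a b k : hprod (fun i => r * a i) b k = r * hprod a b k.
Proof. by rewrite /hprod mulr_sumr; apply: eq_bigr => h _; rewrite mulrCA !mulrA. Qed.

(* Pascal's rule splits ['C(k.+1, h.+1)] into the two Leibniz terms. *)
Lemma hprodS a b k : hprod a b k.+1 = hprod (hderiv a) b k + hprod a (hderiv b) k.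
Proof.
rewrite /hprod big_ord_recl /= bin0 subn0.
under eq_bigr => h _ do rewrite /bump /= binS natrD !mulrDl subSS.
rewrite big_split /= addrA addrC; congr (_ + _).
rewrite [in RHS]big_ord_recl /= bin0 subn0 /hderiv big_ord_recr /= bin_small //.
rewrite !mul0r addr0; congr (_ + _); apply: eq_bigr => h _.
by rewrite /bump /= subnSK.
Qed.

Lemma hderiv_hprod a b :
  hderiv (hprod a b) = fun k => hprod (hderiv a) b k + hprod a (hderiv b) k.
Proof. by apply: functional_extensionality => k; rewrite /hderiv hprodS. Qed.

(* Both sides obey the same Leibniz recursion [hprodS] in the index. *)
Lemma hprodA a b c : hprod a (hprod b c) = hprod (hprod a b) c.
Proof.
apply: functional_extensionality => k; elim: k a b c => [|k IH] a b c.
  by rewrite !hprod0 mulrA.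
rewrite !hprodS !hderiv_hprod hprodDl hprodDr.
by rewrite IH (IH a) (IH a b) addrA.
Qed.

End HurwitzProduct.

HB.instance Definition _ (R : comPzRingType) :=
  Monoid.isComLaw.Build (nat -> R) (hunit R) (@hprod R)
    (@hprodA R) (@hprodC R) (fun a => etrans (hprodC _ _) (hprod1 a)).

Section MultiplicityVectors.
Variable N : nat.
Local Notation mvec := {ffun 'I_N -> 'I_N.+1}.
Implicit Types (j : mvec) (i l : 'I_N).

(* [j l] is the number of parts of size [l.+1] of a partition. *)
Definition nparts j := \sum_(l < N) j l.
Definition weight j := \sum_(l < N) l.+1 * j l.
Definition bell_denom j := \prod_(l < N) ((j l)`! * (l.+1)`! ^ j l).

Definition drop_part i j : mvec := [ffun l => inord (j l - (l == i))].
Definition add_part i j : mvec := [ffun l => inord (j l + (l == i))].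

Lemma drop_partE i j l : drop_part i j l = j l - (l == i) :> nat.
Proof. by rewrite ffunE inordK // ltnS (leq_trans (leq_subr _ _)) // -ltnS. Qed.

Lemma add_partE i j l : j i < N -> add_part i j l = j l + (l == i) :> nat.
Proof.
move=> ji; rewrite ffunE inordK //.
by case: eqP => [->|_]; rewrite ?addn1 ?addn0 // -ltnS.
Qed.

(* When [j i] is already [N], adding a part overflows and [inord] wraps to 0. *)
Lemma add_part_full i j : j i = N :> nat -> add_part i j i = 0 :> nat.
Proof. by move=> ji; rewrite ffunE eqxx ji /inord /insubd insubN //= addn1 ltnn. Qed.

Lemma drop_partK i j : 0 < j i -> add_part i (drop_part i j) = j.
Proof.
move=> ji; apply/ffunP => l; apply: val_inj => /=.
have jN := ltn_ord (j i); rewrite add_partE ?drop_partE ?eqxx; last by lia.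
by case: eqP => [->|_]; lia.
Qed.

Lemma add_partK i j : j i < N -> drop_part i (add_part i j) = j.
Proof.
move=> ji; apply/ffunP => l; apply: val_inj => /=.
by rewrite drop_partE add_partE // addnK.
Qed.

Lemma big_drop_part (V : Type) (idx : V) (op : Monoid.com_law idx)
    (F : 'I_N -> nat -> V) i j : 0 < j i ->
  op (\big[op/idx]_(l < N) F l (drop_part i j l)) (F i (j i)) =
  op (\big[op/idx]_(l < N) F l (j l)) (F i (j i).-1).
Proof.
move=> ji; rewrite (bigD1 i) //= [in RHS](bigD1 i) //= drop_partE eqxx subn1.
rewrite (eq_bigr (fun l => F l (j l))); last first.
  by move=> l /negbTE nl; rewrite drop_partE nl subn0.
rewrite Monoid.mulmAC [in RHS]Monoid.mulmAC; congr (op _ _); exact: Monoid.mulmC.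
Qed.

Lemma big_add_part (V : Type) (idx : V) (op : Monoid.com_law idx)
    (F : 'I_N -> nat -> V) i j : j i < N ->
  op (\big[op/idx]_(l < N) F l (add_part i j l)) (F i (j i)) =
  op (\big[op/idx]_(l < N) F l (j l)) (F i (j i).+1).
Proof.
move=> ji; have ji' : 0 < add_part i j i by rewrite add_partE // eqxx addn1.
by have := big_drop_part op F ji'; rewrite add_partK // add_partE // eqxx addn1.
Qed.

Lemma weight_drop i j : 0 < j i -> weight (drop_part i j) = weight j - i.+1.
Proof.
move=> ji; have := big_drop_part addn (fun l x => l.+1 * x) ji.
rewrite /weight /= -subn1 mulnBr muln1.
have : i.+1 <= i.+1 * j i by rewrite leq_pmulr.
by move: (\sum_(l < N) _) (\sum_(l < N) _) (i.+1 * j i) => a b c; lia.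
Qed.

Lemma bell_denom_drop i j : 0 < j i ->
  bell_denom j = bell_denom (drop_part i j) * (j i * (i.+1)`!).
Proof.
move=> ji; have := big_drop_part muln (fun l x => x`! * (l.+1)`! ^ x) ji.
rewrite /bell_denom; case: (j i : nat) ji => [//|n] _ /=.
rewrite factS expnS => E.
have P : 0 < n`! * (i.+1)`! ^ n by rewrite muln_gt0 fact_gt0 expn_gt0 fact_gt0.
by apply/eqP; rewrite -(eqn_pmul2r P) -E; apply/eqP; ring.
Qed.

Lemma nparts_add i j : j i < N -> nparts (add_part i j) = (nparts j).+1.
Proof. by move=> ji; have := big_add_part addn (fun _ x => x) ji; rewrite /nparts /=; lia. Qed.

Lemma weight_add i j : j i < N -> weight (add_part i j) = weight j + i.+1.
Proof.
move=> ji; have := big_add_part addn (fun l x => l.+1 * x) ji; rewrite /weight /= mulnS.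
by move: (\sum_(l < N) _) (\sum_(l < N) _) (i.+1 * j i) => a b c; lia.
Qed.

Lemma leq_weight j l : l.+1 * j l <= weight j.
Proof. by rewrite /weight (bigD1 l) //= leq_addr. Qed.

Lemma nparts_le_weight j : nparts j <= weight j.
Proof. by apply: leq_sum => l _; rewrite leq_pmull. Qed.

Lemma bell_denom_gt0 j : 0 < bell_denom j.
Proof. by apply: prodn_gt0 => l; rewrite muln_gt0 fact_gt0 expn_gt0 fact_gt0. Qed.

Lemma weight_eq0 j : weight j = 0 -> forall l, j l = 0 :> nat.
Proof. by move=> w l; have := leq_weight j l; rewrite w leqn0 muln_eq0 => /eqP. Qed.

Lemma leq_weight_part j i m : weight j = m.+1 -> 0 < j i -> i <= m.
Proof.
move=> w ji; have := leq_weight j i; rewrite w.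
have : i.+1 <= i.+1 * j i by rewrite leq_pmulr.
lia.
Qed.

(* Removing one part of size [i.+1] in all possible ways: the term of index
   [i] equals [m`! * (i.+1 * j i)], and these add up to [m`! * weight j]. *)
Lemma bell_denom_sum m j : weight j = m.+1 ->
    (forall i, 0 < j i -> bell_denom (drop_part i j) %| (m - i)`!) ->
  bell_denom j * \sum_(i < N | 0 < j i)
      'C(m, i) * ((m - i)`! %/ bell_denom (drop_part i j)) = m.+1`!.
Proof.
move=> w dvd; rewrite big_distrr /=.
rewrite (eq_bigr (fun i : 'I_N => m`! * (i.+1 * j i))) => [|i ji]; last first.
  have := bin_fact (leq_weight_part w ji); have := divnK (dvd i ji).
  rewrite (bell_denom_drop ji) factS.
  move: (bell_denom _) (m - i)`! => d f; move: (f %/ d) => q qd bf.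
  by rewrite -bf -qd; ring.
rewrite -big_distrr /= factS mulnC -w /weight [in RHS](bigID (fun i => 0 < j i)) /=.
rewrite [X in _ = (_ + X) * _]big1 ?addn0 // => i.
by rewrite lt0n negbK => /eqP ->; rewrite muln0.
Qed.

Lemma bell_denom_dvd m j : weight j = m -> bell_denom j %| m`!.
Proof.
elim/ltn_ind: m j => -[|m] IH j w.
  by rewrite /bell_denom big1 // => l _; rewrite weight_eq0.
rewrite -(bell_denom_sum w) ?dvdn_mulr // => i ji.
by apply: IH; rewrite ?ltnS ?leq_subr // weight_drop // w.
Qed.

Lemma bell_coef_rec m j : weight j = m.+1 ->
  m.+1`! %/ bell_denom j = \sum_(i < N | 0 < j i)
      'C(m, i) * ((m - i)`! %/ bell_denom (drop_part i j)).
Proof.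
move=> w; rewrite -(bell_denom_sum w) ?mulKn ?bell_denom_gt0 // => i ji.
by apply: bell_denom_dvd; rewrite weight_drop // w.
Qed.

End MultiplicityVectors.

(* Multiplicity vectors of different lengths are compared through their
   extension by zeros. *)
Definition mvec_nat M (j : {ffun 'I_M -> 'I_M.+1}) (l : nat) : nat :=
  if insub l is Some l' then j l' else 0.

Definition resize_mvec M N (j : {ffun 'I_M -> 'I_M.+1}) : {ffun 'I_N -> 'I_N.+1} :=
  [ffun l : 'I_N => inord (mvec_nat j l)].

Lemma mvec_natE M (j : {ffun 'I_M -> 'I_M.+1}) (l : 'I_M) : mvec_nat j l = j l.
Proof. by rewrite /mvec_nat valK. Qed.

Lemma mvec_nat_out M (j : {ffun 'I_M -> 'I_M.+1}) l : M <= l -> mvec_nat j l = 0.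
Proof. by move=> Ml; rewrite /mvec_nat insubN // -leqNgt. Qed.

Lemma mvec_nat_le M (j : {ffun 'I_M -> 'I_M.+1}) l : mvec_nat j l <= M.
Proof. by rewrite /mvec_nat; case: insub => // l'; rewrite -ltnS. Qed.

Lemma big_ord_widen_idx M N (V : Type) (idx : V) (op : Monoid.law idx)
    (F : nat -> V) :
  M <= N -> (forall l, M <= l -> F l = idx) ->
  \big[op/idx]_(l < N) F l = \big[op/idx]_(l < M) F l.
Proof.
move=> MN F0; rewrite (big_ord_widen _ _ MN) [RHS]big_mkcond.
by apply: eq_bigr => l _; case: ltnP => // /F0.
Qed.

Lemma big_mvec_nat M N (V : Type) (idx : V) (op : Monoid.law idx)
    (F : nat -> nat -> V) (j : {ffun 'I_M -> 'I_M.+1}) :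
  M <= N -> (forall l, F l 0 = idx) ->
  \big[op/idx]_(l < N) F l (mvec_nat j l) = \big[op/idx]_(l < M) F l (j l).
Proof.
move=> MN F0; rewrite (@big_ord_widen_idx M N _ _ op (fun l => F l (mvec_nat j l))) //.
  by apply: eq_bigr => l _; rewrite mvec_natE.
by move=> l Ml; rewrite mvec_nat_out.
Qed.

Lemma mvec_nat_widen M N (j : {ffun 'I_M -> 'I_M.+1}) l :
  M <= N -> mvec_nat (resize_mvec N j) l = mvec_nat j l.
Proof.
move=> MN; case: (ltnP l N) => lN; last by rewrite !mvec_nat_out ?(leq_trans MN lN).
rewrite -[l]/(nat_of_ord (Ordinal lN)) mvec_natE ffunE inordK //.
by rewrite ltnS (leq_trans (mvec_nat_le j l)).
Qed.

Lemma mvec_nat_narrow M N (j : {ffun 'I_N -> 'I_N.+1}) l m : m <= M -> weight j = m ->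
  mvec_nat (resize_mvec M j) l = mvec_nat j l.
Proof.
move=> mM w.
have [jl_le jl_out] : mvec_nat j l <= M /\ (M <= l -> mvec_nat j l = 0).
  case: (ltnP l N) => lN; last by rewrite mvec_nat_out.
  have := leq_weight j (Ordinal lN); rewrite w -[l]/(nat_of_ord (Ordinal lN)) mvec_natE.
  case: (nat_of_ord (j _)) => [//|n] /= jw.
  have : n.+1 <= l.+1 * n.+1 by rewrite leq_pmull.
  have : l.+1 <= l.+1 * n.+1 by rewrite leq_pmulr.
  by move: (l.+1 * n.+1) jw => c; lia.
case: (ltnP l M) => lM; last by rewrite mvec_nat_out // jl_out.
by rewrite -[l]/(nat_of_ord (Ordinal lM)) mvec_natE ffunE inordK.
Qed.

Section BellPolynomials.
Variable R : comPzRingType.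
Local Open Scope ring_scope.
Implicit Types (y : nat -> R) (m k : nat).

Definition bell_mono N y (j : {ffun 'I_N -> 'I_N.+1}) : R := \prod_(l < N) y l.+1 ^+ j l.

(* [bellY m k] sums over multiplicity vectors indexed by ['I_m]; [bellYN N]
   allows any index bound [N], which does not matter once [m <= N]. *)
Definition bellYN N m k y : R :=
  \sum_(j : {ffun 'I_N -> 'I_N.+1} | (nparts j == k) && (weight j == m))
    ((m`! %/ bell_denom j)%N%:R * bell_mono y j).

Lemma bellYE m k y : bellY m k y = bellYN m m k y.
Proof. by []. Qed.

Lemma bell_mono_drop N y (j : {ffun 'I_N -> 'I_N.+1}) i : (0 < j i)%N ->
  bell_mono y j = y i.+1 * bell_mono y (drop_part i j).
Proof.
move=> ji; rewrite /bell_mono (bigD1 i) //= [in RHS](bigD1 i) //= drop_partE eqxx.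
rewrite [in RHS](eq_bigr (fun l : 'I_N => y l.+1 ^+ j l)); last first.
  by move=> l /negbTE nl; rewrite drop_partE nl subn0.
by case: (j i : nat) ji => // n _; rewrite subn1 exprS mulrA.
Qed.

Lemma bellYN_widen M N m k y : (m <= M)%N -> (M <= N)%N ->
  bellYN M m k y = bellYN N m k y.
Proof.
move=> mM MN; rewrite /bellYN (reindex_onto (resize_mvec N) (resize_mvec M)); last first.
  move=> j /andP[_ /eqP w]; apply/ffunP => l; apply: val_inj.
  by rewrite ffunE /= (mvec_nat_narrow _ mM w) mvec_natE inord_val.
have resizeK (j : {ffun 'I_M -> 'I_M.+1}) : resize_mvec M (resize_mvec N j) = j.
  apply/ffunP => l; apply: val_inj.
  by rewrite ffunE /= mvec_nat_widen // mvec_natE inord_val.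
have big_resize (V : Type) (idx : V) (op : Monoid.law idx) (F : nat -> nat -> V)
    (j : {ffun 'I_M -> 'I_M.+1}) : (forall l, F l 0%N = idx) ->
    \big[op/idx]_(l < N) F l (resize_mvec N j l) = \big[op/idx]_(l < M) F l (j l).
  move=> F0; rewrite -(@big_mvec_nat M N _ _ op F j MN F0).
  by apply: eq_bigr => l _; rewrite -mvec_natE mvec_nat_widen.
apply: eq_big => [j|j _].
  rewrite resizeK eqxx andbT /nparts /weight (big_resize _ _ addn (fun _ x => x)) //.
  by rewrite (big_resize _ _ addn (fun l x => l.+1 * x)%N) // => l; rewrite muln0.
rewrite /bell_denom /bell_mono.
rewrite (big_resize _ _ muln (fun l x => x`! * (l.+1)`! ^ x)%N) //.
by rewrite (big_resize _ _ *%R (fun l x => y l.+1 ^+ x)).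
Qed.

Lemma bellYN_rec N m k y : (m < N)%N ->
  bellYN N m.+1 k.+1 y = \sum_(i < N) 'C(m, i)%:R * y i.+1 * bellYN N (m - i) k y.
Proof.
move=> mN; rewrite /bellYN.
rewrite (eq_bigr (fun j : {ffun 'I_N -> 'I_N.+1} =>
    \sum_(i < N | (0 < j i)%N) ('C(m, i)%:R * y i.+1 *
    (((m - i)`! %/ bell_denom (drop_part i j))%N%:R * bell_mono y (drop_part i j)))));
  last first.
  move=> j /andP[_ /eqP w]; rewrite bell_coef_rec // natr_sum big_distrl.
  by apply: eq_bigr => i ji; rewrite natrM (bell_mono_drop y ji) mulrACA.
rewrite (exchange_big_dep xpredT) //=; apply: eq_bigr => i _; rewrite -big_distrr /=.
have [im|mi] := leqP i m; last by rewrite bin_small // !mul0r.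
congr (_ * _); rewrite (reindex_onto (add_part i) (drop_part i)) /=; last first.
  by move=> j /andP[_ ji]; apply: drop_partK.
apply: eq_big => [j|j /andP[_ /eqP ->]] //.
have [jN|] := ltnP (j i) N.
  rewrite nparts_add // weight_add // add_partE // eqxx addn1 /= add_partK // eqxx.
  by rewrite andbT eqSS; case: (nparts j == k) => //=; apply/eqP/eqP; lia.
rewrite leq_eqVlt ltnNge -ltnS ltn_ord orbF eq_sym => /eqP jN.
rewrite (add_part_full jN) /= andbF; apply/esym/negbTE; rewrite negb_and orbC.
have := leq_weight j i; rewrite jN; have : (N <= i.+1 * N)%N by rewrite leq_pmull.
by move: (i.+1 * N)%N => c Nc cw; apply/eqP; lia.
Qed.

Lemma bellYSS m k y :
  bellY m.+1 k.+1 y = \sum_(i < m.+1) 'C(m, i)%:R * y i.+1 * bellY (m - i) k y.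
Proof.
rewrite bellYE bellYN_rec //; apply: eq_bigr => i _.
by rewrite bellYE (@bellYN_widen (m - i) m.+1) // (leq_trans (leq_subr _ _)).
Qed.

Lemma bellYS0 m y : bellY m.+1 0 y = 0.
Proof.
rewrite bellYE /bellYN big1 // => j /andP[/eqP n0 /eqP w].
have j0 l : (j l : nat) = 0%N.
  by move: n0 => /eqP; rewrite sum_nat_eq0 => /forallP /(_ l) /implyP /(_ isT) /eqP.
by move: w; rewrite /weight big1 // => l _; rewrite j0 muln0.
Qed.

Lemma bellY_small m k y : (m < k)%N -> bellY m k y = 0.
Proof.
move=> mk; rewrite bellYE /bellYN big1 // => j /andP[/eqP n /eqP w].
by have := nparts_le_weight j; rewrite n w leqNgt mk.
Qed.

Lemma bellY00 y : bellY 0 0 y = 1.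
Proof.
rewrite bellYE /bellYN (big_pred1 [ffun l => ord0]).
  by rewrite /bell_denom /bell_mono !big_ord0 mul1r.
by move=> j /=; rewrite /nparts /weight !big_ord0; apply/esym/eqP/ffunP => -[].
Qed.

Lemma eq_bellY m k y y' : (forall l, (l <= m)%N -> y l = y' l) ->
  bellY m k y = bellY m k y'.
Proof.
move=> yy'; apply: eq_bigr => j _; congr (_ * _); apply: eq_bigr => l _.
by rewrite yy'.
Qed.

End BellPolynomials.

Section HurwitzPowers.
Variable R : comPzRingType.
Local Open Scope ring_scope.
Implicit Types (a : nat -> R) (x z : R).

Lemma ffactS x k : ffact x k.+1 = x * ffact (x - 1) k.
Proof.
rewrite /ffact big_ord_recl subr0; congr (_ * _); apply: eq_bigr => i _.
by rewrite /bump /= -natr1 opprD addrA addrAC.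
Qed.

Lemma hpow0 a x : hpow a x 0 = 1.
Proof. by rewrite /hpow big_ord1 bellY00 /ffact big_ord0 mulr1. Qed.

Lemma hpowS a x m : hpow a x m.+1 = x * hprod (hderiv a) (hpow a (x - 1)) m.
Proof.
rewrite /hpow big_ord_recl bellYS0 mul0r add0r.
under eq_bigr => k _ do rewrite /bump /= bellYSS ffactS big_distrl /=.
rewrite exchange_big /hprod mulr_sumr; apply: eq_bigr => i _.
rewrite -(@big_ord_widen_idx (m - i).+1 m.+1 _ _ _
  (fun k => bellY (m - i) k a * ffact (x - 1) k)); first last.
- by move=> k ik; rewrite bellY_small ?mul0r.
- by rewrite ltnS leq_subr.
rewrite !mulr_sumr; apply: eq_bigr => k _.
by rewrite mulrCA /hderiv -!mulrA.
Qed.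

Lemma hderiv_hpow a x :
  hderiv (hpow a x) = fun m => x * hprod (hderiv a) (hpow a (x - 1)) m.
Proof. by apply: functional_extensionality => m; rewrite /hderiv hpowS. Qed.

Lemma hpowD a x z : hpow a (x + z) = hprod (hpow a x) (hpow a z).
Proof.
apply: functional_extensionality => m; elim/ltn_ind: m x z => -[|m] IH x z.
  by rewrite hprod0 !hpow0 mulr1.
have IHm y y' : y + y' = x + z - 1 ->
    hprod (hderiv a) (hprod (hpow a y) (hpow a y')) m =
    hprod (hderiv a) (hpow a (x + z - 1)) m.
  by move=> <-; apply: eq_hprod => // i im; rewrite IH.
rewrite hprodS !hderiv_hpow hprodZl [hprod (hpow a x) _]hprodC hprodZl.
rewrite -!hprodA IHm ?IHm ?hpowS ?mulrDl //; last by rewrite addrAC.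
by rewrite addrC addrA.
Qed.

Lemma eq_hpow a a' x m : (forall l, (l <= m)%N -> a l = a' l) ->
  hpow a x m = hpow a' x m.
Proof. by move=> aa'; apply: eq_bigr => k _; rewrite (eq_bellY _ aa'). Qed.

End HurwitzPowers.

Section BSequencePowers.
Variable R : comPzRingType.
Local Open Scope ring_scope.

Lemma bseq_small i t : (0 < t < i)%N -> Defs.bseq R i t = 0.
Proof.
move=> ti; rewrite /Defs.bseq.
have [i1 t0 ti'] : [/\ (i == 1)%N = false, (t == 0)%N = false & (t == i)%N = false].
  by split; apply/eqP; lia.
by rewrite i1 t0 ti'.
Qed.

Lemma hpow_bseq_small i x t : (0 < t < i)%N -> hpow (Defs.bseq R i) x t = 0.
Proof.
case: t => // t /andP[_ ti]; rewrite hpowS /hprod big1 ?mulr0 // => h _.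
have ht := ltn_ord h; rewrite /hderiv bseq_small ?mulr0 ?mul0r //; lia.
Qed.

Lemma hpow_bseq_eq i x : (0 < i)%N -> hpow (Defs.bseq R i) x i = x.
Proof.
case: i => // i _; rewrite hpowS /hprod big_ord_recr /= big1 ?add0r => [|h _].
  by rewrite subnn binn hpow0 /hderiv /Defs.bseq eqxx orbT if_same !mulr1.
have ht := ltn_ord h; rewrite /hderiv bseq_small ?mulr0 ?mul0r //; lia.
Qed.

Lemma hpow_bseq_unit i z t : (t < i)%N -> hpow (Defs.bseq R i) z t = hunit R t.
Proof.
case: t => [_|t ti]; first by rewrite hpow0.
by rewrite hpow_bseq_small.
Qed.

End BSequencePowers.

Section Tau.
Variable R : comPzRingType.
Local Open Scope ring_scope.
Implicit Types (x y a : nat -> R).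

Definition bpow_prod x m : nat -> R :=
  \big[@hprod R/hunit R]_(i < m) hpow (Defs.bseq R i.+1) (x i).

Definition tau x : nat -> R := fun n => bpow_prod x n n.

Lemma bpow_prod0 x m : bpow_prod x m 0 = 1.
Proof.
apply: (big_ind (fun f : nat -> R => f 0%N = 1)) => // [f g f0 g0|i _].
  by rewrite hprod0 f0 g0 mulr1.
exact: hpow0.
Qed.

Lemma bpow_prodS x m :
  bpow_prod x m.+1 = hprod (bpow_prod x m) (hpow (Defs.bseq R m.+1) (x m)).
Proof. exact: big_ord_recr. Qed.

Lemma eq_bpow_prod x y m : (forall i, (i < m)%N -> x i = y i) ->
  bpow_prod x m = bpow_prod y m.
Proof. by move=> xy; apply: eq_bigr => i _; rewrite xy. Qed.

(* Later factors agree with the unit below their index. *)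
Lemma bpow_prod_stable x m m' n : (m <= m')%N -> (n <= m)%N ->
  bpow_prod x m' n = bpow_prod x m n.
Proof.
move=> + nm; elim: m' => [|m' IH]; first by rewrite leqn0 => /eqP ->.
rewrite leq_eqVlt ltnS => /orP[/eqP -> //|mm'].
rewrite bpow_prodS -IH // -[RHS](congr1 (fun f => f n) (hprod1 (bpow_prod x m'))).
apply: eq_hprod => // t tn.
by rewrite hpow_bseq_unit // ltnS (leq_trans tn) ?(leq_trans nm).
Qed.

Lemma bpow_prodD x y m :
  bpow_prod (fun i => x i + y i) m = hprod (bpow_prod x m) (bpow_prod y m).
Proof. by rewrite /bpow_prod -big_split; apply: eq_bigr => i _; rewrite hpowD. Qed.

Lemma tau0 x : tau x 0 = 1.
Proof. exact: bpow_prod0. Qed.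

Lemma tauD x y : tau (fun i => x i + y i) = hprod (tau x) (tau y).
Proof.
apply: functional_extensionality => n; rewrite /tau bpow_prodD.
by apply: eq_hprod => i ni; rewrite (bpow_prod_stable _ ni).
Qed.

Lemma tauS x m : tau x m.+1 = bpow_prod x m m.+1 + x m.
Proof.
rewrite /tau bpow_prodS /hprod big_ord_recr /= big_ord_recl /= subnn binn hpow0.
rewrite subn0 bin0 bpow_prod0 hpow_bseq_eq // big1 ?addr0 => [|h _]; last first.
  have hm := ltn_ord h; rewrite /bump /= hpow_bseq_small ?mulr0 //; lia.
by rewrite !mul1r mulr1 addrC.
Qed.

Lemma eq_tau x y n : (forall i, (i < n)%N -> x i = y i) -> tau x n = tau y n.
Proof. by move=> xy; rewrite /tau (eq_bpow_prod xy). Qed.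

Lemma tau_inj_prefix x y N : (forall n, (n <= N)%N -> tau x n = tau y n) ->
  forall i, (i < N)%N -> x i = y i.
Proof.
move=> txy; elim/ltn_ind=> i IH iN.
have := txy i.+1 iN; rewrite !tauS (@eq_bpow_prod x y) => [|j ji].
  exact: addrI.
by apply: IH => //; apply: ltn_trans iN.
Qed.

Lemma tau_inj : injective tau.
Proof.
move=> x y txy; apply: functional_extensionality => i.
by apply: (@tau_inj_prefix _ _ i.+1) => // n _; rewrite txy.
Qed.

(* [tau_inv_prefix a m] solves [tau x n = a n] for [0 < n <= m] by forward
   substitution in [tauS]; it is then extended past [m] by zeros. *)
Fixpoint tau_inv_prefix a m : nat -> R :=
  if m is m'.+1 then fun i =>
    if (i < m')%N then tau_inv_prefix a m' i
    else a m - bpow_prod (tau_inv_prefix a m') m' m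
  else fun _ => 0.

Definition tau_inv a : nat -> R := fun i => tau_inv_prefix a i.+1 i.

Lemma tau_inv_prefixE a m i : (i < m)%N -> tau_inv_prefix a m i = tau_inv a i.
Proof.
elim: m => // m IH; rewrite ltnS leq_eqVlt => /orP[/eqP ->|im] /=.
  by rewrite /tau_inv.
by rewrite im IH.
Qed.

Lemma tau_invK a : a 0%N = 1 -> tau (tau_inv a) = a.
Proof.
move=> a0; apply: functional_extensionality => -[|m]; first by rewrite tau0.
rewrite tauS (@eq_bpow_prod _ (tau_inv_prefix a m)) => [|i im]; last first.
  by rewrite tau_inv_prefixE.
by rewrite /tau_inv /= ltnn addrC subrK.
Qed.

End Tau.

Section Truncation.
Variable R : comPzRingType.
Local Open Scope ring_scope.

Lemma atE n (a : {ffun 'I_n -> R}) (i : 'I_n) : at_ a i = a i.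
Proof. by rewrite /at_ valK. Qed.

Lemma at_out n (a : {ffun 'I_n -> R}) i : (n <= i)%N -> at_ a i = 0.
Proof. by move=> ni; rewrite /at_ insubN // -leqNgt. Qed.

Lemma at_finfun n (f : 'I_n -> R) k (kn : (k < n)%N) :
  at_ (finfun f) k = f (Ordinal kn).
Proof. by rewrite -[k]/(nat_of_ord (Ordinal kn)) atE ffunE. Qed.

Lemma at_big_hprodn n p (F : 'I_p -> {ffun 'I_n -> R}) (G : 'I_p -> nat -> R) :
    (forall i k, (k < n)%N -> at_ (F i) k = G i k) ->
  forall k, (k < n)%N ->
  at_ (\big[@hprodn R n/hunitn R n]_(i < p) F i) k =
  (\big[@hprod R/hunit R]_(i < p) G i) k.
Proof.
elim: p F G => [|p IH] F G FG k kn.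
  by rewrite !big_ord0 (at_finfun _ kn).
rewrite !big_ord_recl (at_finfun _ kn).
apply: eq_hprod => i ik; have ilt := leq_ltn_trans ik kn; first exact: FG.
by apply: IH => // i' k' k'n; apply: FG.
Qed.

Lemma taunE n (x : {ffun 'I_n.-1 -> R}) k :
  (k < n)%N -> at_ (taun x) k = tau (at_ x) k.
Proof.
move=> kn; rewrite /taun (@at_big_hprodn _ _ _ (fun i => hpow (Defs.bseq R i.+1) (x i))).
- rewrite /tau -(bpow_prod_stable _ (_ : k <= n.-1)%N) ?(leqnn k) //; last first.
    by rewrite -ltnS (leq_trans kn) // leqSpred.
  by rewrite /bpow_prod; congr (_ k); apply: eq_bigr => i _; rewrite atE.
- move=> i k' k'n; rewrite (at_finfun _ k'n); apply: eq_hpow => l lk'.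
  by rewrite (at_finfun _ (leq_ltn_trans lk' k'n)).
- exact: kn.
Qed.

End Truncation.

Section FiniteTau.
Variables (R : comPzRingType) (n : nat).
Hypothesis n_gt0 : (0 < n)%N.
Local Open Scope ring_scope.
Implicit Types x y : {ffun 'I_n.-1 -> R}.

Lemma atD x y : at_ (x + y) = fun i => at_ x i + at_ y i.
Proof.
apply: functional_extensionality => i; case: (ltnP i n.-1) => [lt|ge].
  by rewrite -[i]/(nat_of_ord (Ordinal lt)) !atE ffunE.
by rewrite !at_out ?addr0.
Qed.

Lemma taun_at0 x : at_ (taun x) 0 = 1.
Proof. by rewrite taunE // tau0. Qed.

Lemma taunD x y : taun (x + y) = hprodn (taun x) (taun y).
Proof.
apply/ffunP => k; rewrite -!atE taunE // atD tauD atE ffunE.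
by apply: eq_hprod => i ik; rewrite taunE // (leq_ltn_trans ik).
Qed.

Lemma taun_inj : injective (@taun R n).
Proof.
move=> x y txy; apply/ffunP => i; rewrite -!atE.
apply: (@tau_inj_prefix _ _ _ n.-1) => // k kn.
by rewrite -!taunE ?txy // (leq_ltn_trans kn) // prednK.
Qed.

Lemma taun_surj (a : {ffun 'I_n -> R}) :
  at_ a 0 = 1 -> exists x, taun x = a.
Proof.
move=> a0; exists [ffun i : 'I_n.-1 => tau_inv (at_ a) i].
apply/ffunP => k; rewrite -atE taunE // -[RHS]atE -{2}(tau_invK a0).
apply: eq_tau => i ik.
have ilt : (i < n.-1)%N by apply: leq_trans ik _; rewrite -ltnS prednK.
by rewrite (at_finfun _ ilt).
Qed.

Lemma tau_trunc (x : nat -> R) (i : 'I_n) : tau x i = taun (trunc x n.-1) i.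
Proof.
rewrite -atE taunE //; apply: eq_tau => l li.
have ln : (l < n.-1)%N by apply: leq_trans li _; rewrite -ltnS prednK.
by rewrite (at_finfun _ ln).
Qed.

End FiniteTau.

Local Open Scope ring_scope.

Theorem mainTheorem8 (R : comPzRingType) :
  (forall n : nat, (1 < n)%N ->
     (forall x : {ffun 'I_n.-1 -> R}, at_ (taun x) 0 = 1) /\
     (forall x y : {ffun 'I_n.-1 -> R}, taun (x + y) = hprodn (taun x) (taun y)) /\
     injective (@taun R n) /\
     (forall a : {ffun 'I_n -> R}, at_ a 0 = 1 ->
        exists x : {ffun 'I_n.-1 -> R}, taun x = a)) /\
  (exists tau : (nat -> R) -> (nat -> R),
     (forall x : nat -> R, tau x 0%N = 1) /\
     (forall (x : nat -> R) (n : nat), (1 < n)%N ->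
        forall i : 'I_n, tau x i = taun (trunc x n.-1) i) /\
     (forall x y : nat -> R, tau (fun i => x i + y i) = hprod (tau x) (tau y)) /\
     (forall x y : nat -> R, tau x = tau y -> x = y) /\
     (forall a : nat -> R, a 0%N = 1 -> exists x : nat -> R, tau x = a)) /\
  (exists f : (nat -> int) -> (nat -> int),
     (forall x, f x 0%N = 1) /\
     (forall x y : nat -> int, f (fun i => x i + y i) = hprod (f x) (f y)) /\
     (forall x y, f x = f y -> x = y) /\
     (forall a : nat -> int, a 0%N = 1 -> exists x, f x = a)).
Proof.
split.
  move=> n /ltnW n_gt0; split; first exact: taun_at0.
  split; first exact: taunD.
  by split; [exact: taun_inj | exact: taun_surj].
split.
  exists (@tau R); split; first exact: tau0.
  split; first by move=> x n /ltnW n_gt0 i; apply: tau_trunc.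
  split; first exact: tauD.
  by split; [exact: tau_inj | move=> a /tau_invK; exists (tau_inv a)].
exists (@tau int); split; first exact: tau0.
split; first exact: tauD.
by split; [exact: tau_inj | move=> a /tau_invK; exists (tau_inv a)].
Qed.
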